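(* Let $(\mathcal A_1,U,\varphi_1),\dots,(\mathcal A_m,U,\varphi_m)$ be symmetric qualitative formalisms over the same set $U$, and let $\mathfrak R'\subseteq U\times U$ be symmetric ($\mathfrak R'=\mathfrak R'^{-1}$). For each distinct $i,j\in\{1,\dots,m\}$ let $\Rsh_i^j$ be a projection operator from $\mathcal A_i$ to $\mathcal A_j$ such that $\varphi_i(b)\cap\varphi_j(\mathcal B_j)\cap\mathfrak R'\subseteq\varphi_j(\Rsh_i^jb)$ for every atom $b$ of $\mathcal A_i$. Let $\mathcal A$ be the multi-algebra $\mathcal A_1\times\cdots\times\mathcal A_m$ equipped with the projections $\Rsh_i^j$, and let $\varphi:\mathcal A\to2^{U\times U}$ be defined by $\varphi(R)=\bigcap_{i=1}^m\varphi_i(R_i)\cap\mathfrak R'$. Then $(\mathcal A,U,\varphi)$ is a sequential formalism.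
   Context: A finite non-associative algebra is a tuple $(\mathcal A,\cup,\neg,\emptyset,\mathcal B,\diamond,\overline{\cdot},e)$ where $(\mathcal A,\cup,\neg,\emptyset,\mathcal B)$ is a finite Boolean algebra (with $x\cap y=\neg(\neg x\cup\neg y)$) and for all $x,y,z$: $\overline{\overline x}=x$, $\overline{x\cup y}=\overline x\cup\overline y$, $\overline{x\diamond y}=\overline y\diamond\overline x$, $e\diamond x=x\diamond e=x$, $x\diamond(y\cup z)=(x\diamond y)\cup(x\diamond z)$, $(x\diamond y)\cap\overline z=\emptyset\iff(y\diamond z)\cap\overline x=\emptyset$. $\mathcal B$ is the universal relation; $r\subseteq r'$ means $r\cup r'=r'$; atoms are the basic relations. A symmetric qualitative formalism is a triple $(\mathcal A,U,\varphi)$ with $\mathcal A$ a finite non-associative algebra, $U\neq\emptyset$ and $\varphi:\mathcal A\to2^{U\times U}$ with $\varphi(\emptyset)=\emptyset$, $\varphi(\overline r)=\varphi(r)^{-1}$, $\varphi(r\cap r')=\varphi(r)\cap\varphi(r')$, $\varphi(r\cup r')=\varphi(r)\cup\varphi(r')$, $\varphi(r\diamond r')\supseteq(\varphi(r)\circ\varphi(r'))\cap\varphi(\mathcal B)$ ($\circ$ composition of binary relations, $^{-1}$ converse). A projection operator from $\mathcal A$ to $\mathcal A'$ is a map $\Rsh$ with $\Rsh(r\cup r')=\Rsh r\cup\Rsh r'$ and $\Rsh\overline r=\overline{\Rsh r}$. A finite multi-algebra is a product $\mathcal A_1\times\cdots\times\mathcal A_m$ of finite non-associative algebras with projection operators $\Rsh_i^j:\mathcal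 A_i\to\mathcal A_j$ for all distinct $i,j$. Relations $R=(R_1,\dots,R_m)$; $R$ basic if all $R_i$ are atoms; universal relation $\mathcal B=(\mathcal B_1,\dots,\mathcal B_m)$; $\diamond,\cap,\cup,\overline{\cdot}$ and $\subseteq$ componentwise; $B\in R$ means $B$ basic with $B\subseteq R$. The projection closure $\Rsh R$ is obtained by repeatedly replacing $R_j$ by $R_j\cap\Rsh_i^jR_i$ (distinct $i,j$) until a fixed point. A sequential formalism is $(\mathcal A,U,\varphi)$ with $\mathcal A$ a finite multi-algebra, $U\ne\emptyset$, $\varphi:\mathcal A\to 2^{U\times U}$ satisfying for all $R,R'$: $\varphi(\Rsh R)=\varphi(R)$, $\varphi(\overline R)=\varphi(R)^{-1}$, $\varphi((\emptyset,\dots,\emptyset))=\emptyset$, $\varphi(R\diamond R')\supseteq(\varphi(R)\circ\varphi(R'))\cap\varphi(\mathcal B)$, $\varphi(R\cap R')=\varphi(R)\cap\varphi(R')$, $\varphi(R)=\bigcup_{B\in R}\varphi(B)$. *)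

From mathcomp Require Import all_boot.
From Stdlib Require Import Relation_Operators.

Set Implicit Arguments.
Unset Strict Implicit.
Unset Printing Implicit Defensive.

Record nalg := NAlg {
  car  : finType;
  cup  : car -> car -> car;
  neg  : car -> car;
  emp  : car;
  univ : car;                         (* the universal relation B *)
  comp : car -> car -> car;
  conv : car -> car;
  eid  : car
}.
Arguments cup : clear implicits.
Arguments neg : clear implicits.
Arguments emp : clear implicits.
Arguments univ : clear implicits.
Arguments comp : clear implicits.
Arguments conv : clear implicits.
Arguments eid : clear implicits.

Definition cap (A : nalg) (x y : car A) : car A :=
  neg A (cup A (neg A x) (neg A y)).
Arguments cap : clear implicits.

Definition sub (A : nalg) (x y : car A) : Prop := cup A x y = y.

Definition is_boolean_algebra (A : nalg) : Prop :=
  (forall x y, cup A x y = cup A y x) /\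
  (forall x y, cap A x y = cap A y x) /\
  (forall x y z, cup A x (cup A y z) = cup A (cup A x y) z) /\
  (forall x y z, cap A x (cap A y z) = cap A (cap A x y) z) /\
  (forall x y, cup A x (cap A x y) = x) /\
  (forall x y, cap A x (cup A x y) = x) /\
  (forall x y z, cup A x (cap A y z) = cap A (cup A x y) (cup A x z)) /\
  (forall x y z, cap A x (cup A y z) = cup A (cap A x y) (cap A x z)) /\
  (forall x, cup A x (emp A) = x) /\
  (forall x, cap A x (univ A) = x) /\
  (forall x, cup A x (neg A x) = univ A) /\
  (forall x, cap A x (neg A x) = emp A).

Definition is_nalg (A : nalg) : Prop :=
  is_boolean_algebra A /\
  (forall x, conv A (conv A x) = x) /\
  (forall x y, conv A (cup A x y) = cup A (conv A x) (conv A y)) /\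
  (forall x y, conv A (comp A x y) = comp A (conv A y) (conv A x)) /\
  (forall x, comp A (eid A) x = x) /\
  (forall x, comp A x (eid A) = x) /\
  (forall x y z, comp A x (cup A y z) = cup A (comp A x y) (comp A x z)) /\
  (forall x y z, cap A (comp A x y) (conv A z) = emp A <->
                 cap A (comp A y z) (conv A x) = emp A).

Definition atom (A : nalg) (b : car A) : Prop :=
  b <> emp A /\ forall x, sub x b -> x = emp A \/ x = b.

Definition brel (U : Type) := U -> U -> Prop.
Definition rsub U (r s : brel U) : Prop := forall x y, r x y -> s x y.
Definition req U (r s : brel U) : Prop := forall x y, r x y <-> s x y.
Definition rcap U (r s : brel U) : brel U := fun x y => r x y /\ s x y.
Definition rcup U (r s : brel U) : brel U := fun x y => r x y \/ s x y.
Definition rinv U (r : brel U) : brel U := fun x y => r y x.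
Definition rcomp U (r s : brel U) : brel U := fun x z => exists y, r x y /\ s y z.
Definition rempty U : brel U := fun _ _ => False.

Definition sym_qual_formalism (A : nalg) (U : Type) (phi : car A -> brel U) : Prop :=
  is_nalg A /\ inhabited U /\
  req (phi (emp A)) (@rempty U) /\
  (forall r, req (phi (conv A r)) (rinv (phi r))) /\
  (forall r r', req (phi (cap A r r')) (rcap (phi r) (phi r'))) /\
  (forall r r', req (phi (cup A r r')) (rcup (phi r) (phi r'))) /\
  (forall r r', rsub (rcap (rcomp (phi r) (phi r')) (phi (univ A)))
                     (phi (comp A r r'))).

Definition projection_operator (A A' : nalg) (P : car A -> car A') : Prop :=
  (forall r r', P (cup A r r') = cup A' (P r) (P r')) /\
  (forall r, P (conv A r) = conv A' (P r)).

Section Multi.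
Variables (m : nat) (A : 'I_m -> nalg).

Definition mrel := forall i : 'I_m, car (A i).

Definition mcomp (R R' : mrel) : mrel := fun i => comp (A i) (R i) (R' i).
Definition mcap  (R R' : mrel) : mrel := fun i => cap (A i) (R i) (R' i).
Definition mcup  (R R' : mrel) : mrel := fun i => cup (A i) (R i) (R' i).
Definition mconv (R : mrel) : mrel := fun i => conv (A i) (R i).
Definition muniv : mrel := fun i => univ (A i).
Definition mempty : mrel := fun i => emp (A i).
Definition msub (R R' : mrel) : Prop := forall i, sub (R i) (R' i).
Definition mbasic (R : mrel) : Prop := forall i, atom (R i).

Variable P : forall i j : 'I_m, car (A i) -> car (A j).

Definition proj_step (R R' : mrel) : Prop :=
  exists i j : 'I_m, i <> j /\
    R' j = cap (A j) (R j) (@P i j (R i)) /\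
    (forall k, k <> j -> R' k = R k).

Definition proj_fixed (R : mrel) : Prop :=
  forall i j : 'I_m, i <> j -> cap (A j) (R j) (@P i j (R i)) = R j.

Definition proj_closure (R R' : mrel) : Prop :=
  clos_refl_trans mrel proj_step R R' /\ proj_fixed R'.

Definition sequential_formalism (U : Type) (phi : mrel -> brel U) : Prop :=
  (forall i, is_nalg (A i)) /\
  (forall i j : 'I_m, i <> j -> projection_operator (@P i j)) /\
  inhabited U /\
  (forall R R', proj_closure R R' -> req (phi R') (phi R)) /\
  (forall R, req (phi (mconv R)) (rinv (phi R))) /\
  req (phi mempty) (@rempty U) /\
  (forall R R', rsub (rcap (rcomp (phi R) (phi R')) (phi muniv)) (phi (mcomp R R'))) /\
  (forall R R', req (phi (mcap R R')) (rcap (phi R) (phi R'))) /\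
  (forall R, req (phi R) (fun x y => exists B, mbasic B /\ msub B R /\ phi B x y)).

End Multi.

Definition product_interp (m : nat) (A : 'I_m -> nalg) (U : Type)
  (phis : forall i, car (A i) -> brel U) (Rp : brel U) : mrel A -> brel U :=
  fun R x y => (forall i, phis i (R i) x y) /\ Rp x y.

(* A pair (u, v) lying in phi_i(x) already lies in phi_i(b) for some atom b
   below x: in a finite Boolean algebra every nonzero non-atom splits as the
   join of two strictly smaller elements, and phi_i maps joins to unions.
   Consequently a projection step R_j := R_j ∩ P_i^j R_i does not change
   phi(R): for (u, v) in phi(R) pick such an atom b of R_i; the compatibility
   hypothesis puts (u, v) in phi_j(P_i^j b), which is below phi_j(P_i^j R_i)
   by monotonicity of the projection.  The same atoms, chosen componentwise,
   give the decomposition of phi(R) into basic relations; the remaining axioms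
   hold componentwise. *)
From Stdlib Require Import Classical ClassicalEpsilon.
From mathcomp Require Import all_boot.

Set Implicit Arguments.
Unset Strict Implicit.

Lemma dep_choice (I : Type) (T : I -> Type) (Q : forall i, T i -> Prop) :
  (forall i, exists x, Q i x) -> exists f : forall i, T i, forall i, Q i (f i).
Proof.
move=> h; exists (fun i => proj1_sig (constructive_indefinite_description _ (h i))).
by move=> i; case: constructive_indefinite_description.
Qed.

Section BooleanAlgebra.
Variable A : nalg.
Hypothesis HA : is_boolean_algebra A.

Let cupC : commutative (cup A).
Proof. by case: HA. Qed.
Let capC : commutative (cap A).
Proof. by case: HA => _ []. Qed.
Let cupA : associative (cup A).
Proof. by case: HA => _ [_ []]. Qed.
Let capA : associative (cap A).
Proof. by case: HA => _ [_ [_ []]]. Qed.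
Let cupKI x y : cup A x (cap A x y) = x.
Proof. by case: HA => _ [_ [_ [_ []]]]. Qed.
Let capKU x y : cap A x (cup A x y) = x.
Proof. by case: HA => _ [_ [_ [_ [_ []]]]]. Qed.
Let cup_capr : right_distributive (cup A) (cap A).
Proof. by case: HA => _ [_ [_ [_ [_ [_ []]]]]]. Qed.
Let capx1 : right_id (univ A) (cap A).
Proof. by case: HA => _ [_ [_ [_ [_ [_ [_ [_ [_ []]]]]]]]]. Qed.
Let cupxN x : cup A x (neg A x) = univ A.
Proof. by case: HA => _ [_ [_ [_ [_ [_ [_ [_ [_ [_ []]]]]]]]]]. Qed.
Let capxN x : cap A x (neg A x) = emp A.
Proof. by case: HA => _ [_ [_ [_ [_ [_ [_ [_ [_ [_ [_ ->]]]]]]]]]]. Qed.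

Lemma cupxx : idempotent_op (cup A).
Proof. by move=> x; rewrite -{2}(capKU x x) cupKI. Qed.

Lemma sub_trans (x y z : car A) : sub x y -> sub y z -> sub x z.
Proof. by rewrite /sub => xy yz; rewrite -yz cupA xy. Qed.

Lemma sub_antisym (x y : car A) : sub x y -> sub y x -> x = y.
Proof. by rewrite /sub => xy yx; rewrite -xy cupC yx. Qed.

Lemma sub_capl (x y : car A) : sub (cap A x y) x.
Proof. by rewrite /sub cupC cupKI. Qed.

Lemma sub_univ (x : car A) : sub x (univ A).
Proof. by rewrite /sub -{1}(capx1 x) cupC capC cupKI. Qed.

Lemma sub_cap_idl (x y : car A) : sub x y -> cap A x y = x.
Proof. by rewrite /sub => xy; rewrite -{1}xy capKU. Qed.

Lemma sub_cup_diff (x y : car A) : sub x y -> cup A x (cap A y (neg A x)) = y.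
Proof. by rewrite /sub => xy; rewrite cup_capr xy cupxN capx1. Qed.

Lemma sub_diff_id (x y : car A) : sub x y -> cap A y (neg A x) = y -> x = emp A.
Proof. by move=> xy e; rewrite -(sub_cap_idl xy) -e capA (sub_cap_idl xy) capxN. Qed.

Definition proper_sub (x y : car A) := sub x y /\ x <> y.

Lemma nonatom_cup_proper (x : car A) : x <> emp A -> ~ atom x ->
  exists y z, [/\ proper_sub y x, proper_sub z x & cup A y z = x].
Proof.
move=> x0 nax.
have [y [yx y0 y_x]] : exists y, [/\ sub y x, y <> emp A & y <> x].
  apply: NNPP => none; apply: nax; split=> // y yx.
  by apply: NNPP => /not_or_and [y0 y_x]; apply: none; exists y.
exists y, (cap A x (neg A y)); split=> //; last exact: sub_cup_diff.
by split; [apply: sub_capl | move/(sub_diff_id yx)].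
Qed.

Definition below (x : car A) : pred (car A) := [pred y | cup A y x == x].

Lemma card_below_proper (x y : car A) : proper_sub x y -> #|below x| < #|below y|.
Proof.
move=> [xy x_y]; apply/proper_card/properP; split.
  by apply/subsetP => z; rewrite !inE => /eqP zx; apply/eqP/(sub_trans zx).
exists y; rewrite !inE; first exact/eqP/cupxx.
by apply/negP => /eqP yx; apply: x_y; apply: sub_antisym.
Qed.

Lemma exists_atom_sub (Q : car A -> Prop) :
  ~ Q (emp A) -> (forall y z, Q (cup A y z) -> Q y \/ Q z) ->
  forall x, Q x -> exists b, [/\ atom b, sub b x & Q b].
Proof.
move=> Q0 Qcup x; have [n xn] := ubnP #|below x|.
elim: n x xn => [//|n IH] x xn Qx.
have [ax|nax] := classic (atom x); first by exists x; split=> //; apply: cupxx.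
have x0 : x <> emp A by move=> e; apply: Q0; rewrite -e.
have [y [z [yx zx e]]] := nonatom_cup_proper x0 nax.
have recur w : proper_sub w x -> Q w -> exists b, [/\ atom b, sub b x & Q b].
  move=> wx Qw; have [b [ab bw Qb]] := IH w (leq_trans (card_below_proper wx) xn) Qw.
  by exists b; split=> //; apply: sub_trans bw wx.1.
by have [/(recur y yx) | /(recur z zx)] : Q y \/ Q z by apply: Qcup; rewrite e.
Qed.

End BooleanAlgebra.

Lemma projection_operator_sub (A A' : nalg) (P : car A -> car A') (x y : car A) :
  projection_operator P -> sub x y -> sub (P x) (P y).
Proof. by case=> Pcup _; rewrite /sub => xy; rewrite -Pcup xy. Qed.

Section QualitativeFormalism.
Variables (A : nalg) (U : Type) (phi : car A -> brel U).
Hypothesis Hphi : sym_qual_formalism phi.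

Let HA : is_boolean_algebra A.
Proof. by case: Hphi => [[]]. Qed.

Lemma sqf_sub (x y : car A) : sub x y -> rsub (phi x) (phi y).
Proof.
case: Hphi => _ [_ [_ [_ [_ [phiU _]]]]].
by rewrite /sub => xy u v h; rewrite -xy; apply/phiU; left.
Qed.

Lemma sqf_cap x y u v : phi (cap A x y) u v <-> phi x u v /\ phi y u v.
Proof. by case: Hphi => _ [_ [_ [_ [phiI _]]]]; apply: phiI. Qed.

Lemma sqf_univ x : rsub (phi x) (phi (univ A)).
Proof. exact/sqf_sub/sub_univ. Qed.

Lemma sqf_atom_sub x u v : phi x u v -> exists b, [/\ atom b, sub b x & phi b u v].
Proof.
case: Hphi => _ [_ [phi0 [_ [_ [phiU _]]]]].
apply: (exists_atom_sub HA (Q := fun w => phi w u v)); first exact/phi0.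
by move=> y z /phiU.
Qed.

End QualitativeFormalism.

Section ProductInterpretation.
Variables (m : nat) (A : 'I_m -> nalg) (U : Type).
Variables (phis : forall i : 'I_m, car (A i) -> brel U) (Rp : brel U).
Variable P : forall i j : 'I_m, car (A i) -> car (A j).
Arguments phis : clear implicits.
Hypothesis Hphis : forall i, sym_qual_formalism (phis i).

Local Notation phi := (product_interp phis Rp).

Section Projections.
Hypothesis Hproj : forall i j : 'I_m, i <> j -> projection_operator (@P i j).
Hypothesis Hatom : forall (i j : 'I_m) (b : car (A i)), i <> j -> atom b ->
  rsub (rcap (rcap (phis i b) (phis j (univ (A j)))) Rp) (phis j (@P i j b)).

Lemma product_interp_proj (i j : 'I_m) (R : mrel A) : i <> j ->
  rsub (phi R) (phis j (@P i j (R i))).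
Proof.
move=> ij u v [hR hRp].
have [b [ab bR hb]] := sqf_atom_sub (Hphis i) (hR i).
apply: (sqf_sub (Hphis j) (projection_operator_sub (Hproj ij) bR)).
by apply: (Hatom ij ab); split=> //; split=> //; apply: (sqf_univ (Hphis j) (hR j)).
Qed.

Lemma product_interp_proj_step (R R' : mrel A) :
  proj_step P R R' -> req (phi R') (phi R).
Proof.
move=> [i [j [ij [eRj eR]]]] u v; split=> [[hR' hRp] | h]; last have [hR hRp] := h.
  split=> // k; have [->|kj] := eqVneq k j; last by rewrite -eR; [apply: hR' | apply/eqP].
  by move: (hR' j); rewrite eRj => /(sqf_cap (Hphis j)) [].
split=> // k; have [->|kj] := eqVneq k j; last by rewrite eR; [apply: hR | apply/eqP].
by rewrite eRj; apply/(sqf_cap (Hphis j)); split; [apply: hR | apply: product_interp_proj h].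
Qed.

Lemma product_interp_proj_closure (R R' : mrel A) :
  proj_closure P R R' -> req (phi R') (phi R).
Proof.
case=> + _; elim=> [R1 R2 /product_interp_proj_step // | // | R1 R2 R3 _ e12 _ e23].
by move=> u v; rewrite e23 e12.
Qed.

End Projections.

Lemma product_interp_conv (R : mrel A) :
  req Rp (rinv Rp) -> req (phi (mconv R)) (rinv (phi R)).
Proof.
have phi_conv i : req (phis i (conv (A i) (R i))) (rinv (phis i (R i))).
  by case: (Hphis i) => _ [_ [_ []]].
move=> RpC u v; split=> [] [h hRp]; (split; last exact/RpC) => i; exact/phi_conv.
Qed.

Lemma product_interp_empty (i0 : 'I_m) : req (phi (mempty A)) (@rempty U).
Proof.
move=> u v; split=> // [] [h _].
by case: (Hphis i0) => _ [_ [phi0 _]]; apply/phi0/h.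
Qed.

Lemma product_interp_comp (R R' : mrel A) :
  rsub (rcap (rcomp (phi R) (phi R')) (phi (muniv A))) (phi (mcomp R R')).
Proof.
move=> u w [[v [[hR _] [hR' _]]] [hB hRp]]; split=> // i.
case: (Hphis i) => _ [_ [_ [_ [_ [_ phiC]]]]].
by apply: phiC; split; [exists v | apply: hB].
Qed.

Lemma product_interp_cap (R R' : mrel A) :
  req (phi (mcap R R')) (rcap (phi R) (phi R')).
Proof.
move=> u v; split=> [[h hRp] | [[hR hRp] [hR' _]]].
  by split; split=> // i; have /(sqf_cap (Hphis i)) [] := h i.
by split=> // i; apply/(sqf_cap (Hphis i)).
Qed.

Lemma product_interp_basic (R : mrel A) :
  req (phi R) (fun u v => exists B, mbasic B /\ msub B R /\ phi B u v).
Proof.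
move=> u v; split=> [[hR hRp] | [B [_ [BR [hB hRp]]]]].
  have [B hB] := dep_choice (fun i => sqf_atom_sub (Hphis i) (hR i)).
  by exists B; split; [|split; [|split=> //]] => i; case: (hB i).
by split=> // i; apply: (sqf_sub (Hphis i) (BR i) (hB i)).
Qed.

End ProductInterpretation.

Theorem mainTheorem3 (m : nat) (A : 'I_m -> nalg) (U : Type)
  (phis : forall i : 'I_m, car (A i) -> brel U)
  (Rp : brel U)
  (P : forall i j : 'I_m, car (A i) -> car (A j)) :
  0 < m ->
  (forall i, sym_qual_formalism (phis i)) ->
  req Rp (rinv Rp) ->
  (forall i j : 'I_m, i <> j -> projection_operator (@P i j)) ->
  (forall (i j : 'I_m) (b : car (A i)), i <> j -> atom b ->
     rsub (rcap (rcap (phis i b) (phis j (univ (A j)))) Rp) (phis j (@P i j b))) ->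
  sequential_formalism P (product_interp phis Rp).
Proof.
move=> m_gt0 Hphis RpC Hproj Hatom.
pose i0 : 'I_m := Ordinal m_gt0.
split; first by move=> i; case: (Hphis i).
split; first exact: Hproj.
split; first by case: (Hphis i0) => _ [].
split; first by move=> R R'; apply: product_interp_proj_closure.
split; first by move=> R; apply: product_interp_conv.
split; first exact: product_interp_empty i0.
split; first exact: product_interp_comp.
split; first exact: product_interp_cap.
exact: product_interp_basic.
Qed.
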